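(* Let $G$ be a Frattini-injective pro-$p$ group and let $H$ be a finitely generated subgroup of $G$. Then $N_G(H) = N_G(\Phi(H))$. In particular, $H$ is normal in $G$ if and only if $\Phi(H)$ is normal in $G$.
   Context: $p$ is a prime; subgroups are closed. $\Phi(H)$ is the Frattini subgroup and $N_G(\cdot)$ the normalizer. A pro-$p$ group $G$ is Frattini-injective if distinct finitely generated subgroups of $G$ have distinct Frattini subgroups. *)

From HB Require Import structures.
From mathcomp Require Import all_boot all_order all_algebra.
From mathcomp Require Import all_classical all_reals all_analysis.

Set Implicit Arguments.
Unset Strict Implicit.
Unset Printing Implicit Defensive.

Local Open Scope classical_set_scope.

Section ProP.
Variables (G : topologicalType) (mul : G -> G -> G) (inv : G -> G) (one : G).

Definition group_axioms : Prop :=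
  [/\ forall x y z, mul x (mul y z) = mul (mul x y) z,
      forall x, mul one x = x, forall x, mul x one = x,
      forall x, mul (inv x) x = one & forall x, mul x (inv x) = one].

Definition topological_group : Prop :=
  [/\ group_axioms,
      continuous (fun z : G * G => mul z.1 z.2) & continuous inv].

Definition is_subgroup (H : set G) : Prop :=
  [/\ H one, forall x y, H x -> H y -> H (mul x y) & forall x, H x -> H (inv x)].

Definition closed_subgroup (H : set G) : Prop := is_subgroup H /\ closed H.
Definition open_subgroup (H : set G) : Prop := is_subgroup H /\ open H.

Definition conj_set (g : G) (H : set G) : set G :=
  [set mul (mul g h) (inv g) | h in H].

Definition normal (H : set G) : Prop := forall g, conj_set g H = H.

Definition normalizer (H : set G) : set G := [set g | conj_set g H = H].

(* the index of N in G is p^k: there are exactly p^k left cosets of N *)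
Definition index_is (N : set G) (n : nat) : Prop :=
  exists f : 'I_n -> G,
    (forall x, exists i, N (mul (inv (f i)) x)) /\
    (forall i j, N (mul (inv (f i)) (f j)) -> i = j).

Definition pro_p_group (p : nat) : Prop :=
  [/\ prime p, topological_group,
      compact [set: G], hausdorff_space G /\ totally_disconnected [set: G] &
      forall N, open_subgroup N -> normal N -> exists k, index_is N (p ^ k)].

Definition closed_gen (X : set G) : set G :=
  [set x | forall K, closed_subgroup K -> X `<=` K -> K x].

Definition finitely_generated (H : set G) : Prop :=
  exists X : set G, finite_set X /\ H = closed_gen X.

Definition maximal_open_subgroup (H M : set G) : Prop :=
  [/\ is_subgroup M, M `<=` H, M <> H,
      (exists U : set G, open U /\ M = H `&` U) &
      forall K, is_subgroup K -> M `<=` K -> K `<=` H -> K = M \/ K = H].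

Definition frattini (H : set G) : set G :=
  [set x | H x /\ forall M, maximal_open_subgroup H M -> M x].

Definition frattini_injective : Prop :=
  forall H K, closed_subgroup H -> closed_subgroup K ->
    finitely_generated H -> finitely_generated K ->
    frattini H = frattini K -> H = K.

End ProP.

(** Conjugation by [g] is a topological automorphism of [G], so it maps
    finitely generated closed subgroups to finitely generated closed subgroups
    and commutes with taking Frattini subgroups: [Φ(H)^g = Φ(H^g)].  Hence [g]
    normalizes [Φ(H)] iff [Φ(H^g) = Φ(H)], which by Frattini-injectivity is
    equivalent to [H^g = H]. *)
From mathcomp Require Import all_boot all_order all_algebra.
From mathcomp Require Import all_classical all_reals all_analysis.

Set Implicit Arguments.
Unset Strict Implicit.
Unset Printing Implicit Defensive.
Local Open Scope classical_set_scope.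

Section TopologicalAutomorphisms.
Variables (G : topologicalType) (mul : G -> G -> G) (inv : G -> G) (one : G).
Hypothesis groupG : group_axioms mul inv one.

Local Notation subgroup := (is_subgroup mul inv one).
Local Notation closed_subgroup := (closed_subgroup mul inv one).
Local Notation closed_gen := (closed_gen mul inv one).
Local Notation finitely_generated := (finitely_generated mul inv one).
Local Notation maximal_open_subgroup := (maximal_open_subgroup mul inv one).
Local Notation frattini := (frattini mul inv one).

Lemma inv_unique a b : mul a b = one -> b = inv a.
Proof.
case: groupG => mulA mul1g mulg1 mulVg _ ab1.
by rewrite -[b]mul1g -(mulVg a) -mulA ab1 mulg1.
Qed.

Lemma invK : cancel inv inv.
Proof. by case: groupG => _ _ _ mulVg _ a; rewrite -(inv_unique (mulVg a)). Qed.

Definition multiplicative (f : G -> G) := forall x y, f (mul x y) = mul (f x) (f y).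

Lemma multiplicative_one f : multiplicative f -> f one = one.
Proof.
move=> fM; case: groupG => mulA mul1g _ mulVg _.
have idem : f one = mul (f one) (f one) by rewrite -fM mul1g.
transitivity (mul (mul (inv (f one)) (f one)) (f one)); first by rewrite mulVg mul1g.
by rewrite -mulA -idem mulVg.
Qed.

Lemma multiplicative_inv f : multiplicative f -> forall x, f (inv x) = inv (f x).
Proof.
move=> fM x; apply: inv_unique.
by case: groupG => _ _ _ _ mulgV; rewrite -fM mulgV (multiplicative_one fM).
Qed.

Lemma preimage_subgroup f H : multiplicative f -> subgroup H -> subgroup (f @^-1` H).
Proof.
move=> fM [H1 HM HV]; split => [|x y Hfx Hfy|x Hfx] /=.
- by rewrite (multiplicative_one fM).
- by rewrite fM; apply: HM.
- by rewrite (multiplicative_inv fM); apply: HV.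
Qed.

Definition top_automorphism (f f' : G -> G) :=
  [/\ cancel f f', cancel f' f, multiplicative f, continuous f & continuous f'].

Section Automorphism.
Variables f f' : G -> G.
Hypothesis autf : top_automorphism f f'.

Lemma top_automorphism_sym : top_automorphism f' f.
Proof.
case: autf => fK f'K fM cf cf'; split => // x y.
by rewrite -{1}(f'K x) -{1}(f'K y) -fM fK.
Qed.

Lemma preimageK S : f' @^-1` (f @^-1` S) = S.
Proof. by case: autf => _ f'K _ _ _; apply/seteqP; split => x /=; rewrite f'K. Qed.

Lemma preimage_image S : f @^-1` S = f' @` S.
Proof.
case: autf => fK f'K _ _ _; apply/seteqP; split => x /=.
- by move=> Sfx; exists (f x); rewrite ?fK.
- by case=> y Sy <-; rewrite f'K.
Qed.

Lemma preimage_closed_subgroup H : closed_subgroup H -> closed_subgroup (f @^-1` H).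
Proof.
case: autf => _ _ fM cf _ [subH clH]; split; first exact: preimage_subgroup.
by apply: preimage_closed => // x _; apply: cf.
Qed.

Lemma preimage_open U : open U -> open (f @^-1` U).
Proof. by case: autf => _ _ _ cf _ oU; apply: open_comp => // x _; apply: cf. Qed.

End Automorphism.

Lemma preimage_closed_gen f f' X : top_automorphism f f' ->
  f @^-1` closed_gen X = closed_gen (f @^-1` X).
Proof.
move=> autf; have autf' := top_automorphism_sym autf.
case: (autf) => fK f'K _ _ _; apply/seteqP; split => x /= genx K clK XK.
- have := genx _ (preimage_closed_subgroup autf' clK); rewrite /= fK; apply.
  by move=> y Xy; apply: XK; rewrite /= f'K.
- by apply: (genx _ (preimage_closed_subgroup autf clK)) => y /XK.
Qed.

Lemma preimage_finitely_generated f f' H : top_automorphism f f' ->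
  finitely_generated H -> finitely_generated (f @^-1` H).
Proof.
move=> autf [X [finX ->]]; exists (f @^-1` X); split.
- by rewrite (preimage_image autf); apply: finite_image.
- exact: preimage_closed_gen autf.
Qed.

Lemma preimage_maximal_open_subgroup f f' H M : top_automorphism f f' ->
  maximal_open_subgroup H M -> maximal_open_subgroup (f @^-1` H) (f @^-1` M).
Proof.
move=> autf [subM MH MneH [U [oU MU]] maxM]; have autf' := top_automorphism_sym autf.
case: (autf) => _ f'K fM _ _; case: (autf') => _ _ f'M _ _; split.
- exact: preimage_subgroup fM subM.
- by move=> x /MH.
- by move=> eqMH; apply: MneH; rewrite -(preimageK autf H) -eqMH preimageK.
- by exists (f @^-1` U); rewrite MU; split => //; apply: (preimage_open autf).
- move=> K subK MK KH.
  have [||<-|<-] := maxM (f' @^-1` K) (preimage_subgroup f'M subK).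
  + by move=> y My; apply: MK; rewrite /= f'K.
  + by move=> y /= /KH; rewrite /= f'K.
  + by left; rewrite preimageK.
  + by right; rewrite preimageK.
Qed.

Lemma preimage_frattini f f' H : top_automorphism f f' ->
  f @^-1` frattini H = frattini (f @^-1` H).
Proof.
move=> autf; have autf' := top_automorphism_sym autf; case: (autf) => fK _ _ _ _.
apply/seteqP; split => x [Hx inMx]; split => // M maxM.
- have := preimage_maximal_open_subgroup autf' maxM.
  by rewrite (preimageK autf) => /inMx; rewrite /= fK.
- exact: (inMx _ (preimage_maximal_open_subgroup autf maxM)).
Qed.

Definition conjg (g x : G) := mul (mul g x) (inv g).

Lemma conj_set_preimage g H : conj_set mul inv g H = conjg (inv g) @^-1` H.
Proof.
case: groupG => mulA mul1g mulg1 mulVg mulgV; apply/seteqP; split => x /=.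
- by case=> y Hy <-; rewrite /conjg invK !mulA mulVg mul1g -mulA mulVg mulg1.
- exists (conjg (inv g) x) => //.
  by rewrite /conjg invK !mulA mulgV mul1g -mulA mulgV mulg1.
Qed.

Hypothesis mul_continuous : continuous (fun z : G * G => mul z.1 z.2).

Lemma mull_continuous a : continuous (mul a).
Proof.
move=> x; apply: (continuous_comp (f := pair a) (g := fun z => mul z.1 z.2));
  last exact: mul_continuous.
by apply: cvg_pair; [apply: cvg_cst | apply: cvg_id].
Qed.

Lemma mulr_continuous a : continuous (mul^~ a).
Proof.
move=> x; apply: (continuous_comp (f := pair^~ a) (g := fun z => mul z.1 z.2));
  last exact: mul_continuous.
by apply: cvg_pair; [apply: cvg_id | apply: cvg_cst].
Qed.

Lemma conjg_top_automorphism g : top_automorphism (conjg g) (conjg (inv g)).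
Proof.
have conj_continuous a : continuous (conjg a).
  by move=> x; apply: (continuous_comp (f := mul a) (g := mul^~ (inv a)));
    [exact: mull_continuous | exact: mulr_continuous].
case: groupG => mulA mul1g mulg1 mulVg mulgV; split => // [x|x|x y].
- by rewrite /conjg invK !mulA mulVg mul1g -mulA mulVg mulg1.
- by rewrite /conjg invK !mulA mulgV mul1g -mulA mulgV mulg1.
- by rewrite /conjg !mulA -(mulA (mul g x) (inv g)) mulVg mulg1.
Qed.

Lemma conj_set_frattini g H :
  conj_set mul inv g (frattini H) = frattini (conj_set mul inv g H).
Proof. by rewrite !conj_set_preimage (preimage_frattini _ (conjg_top_automorphism _)). Qed.

Lemma normalizer_frattini H :
  frattini_injective mul inv one -> closed_subgroup H -> finitely_generated H ->
  normalizer mul inv H = normalizer mul inv (frattini H).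
Proof.
move=> injF clH fgH; apply/seteqP; split => g; rewrite /normalizer /= conj_set_frattini.
- by move->.
- rewrite conj_set_preimage => eqF; apply: injF => //.
  + exact: (preimage_closed_subgroup (conjg_top_automorphism (inv g))).
  + exact: (preimage_finitely_generated (conjg_top_automorphism (inv g))).
Qed.

End TopologicalAutomorphisms.

Lemma normal_normalizer (G : topologicalType) (mul : G -> G -> G) (inv : G -> G)
  (H : set G) : normal mul inv H <-> normalizer mul inv H = setT.
Proof.
split=> [nH | NH g]; first by apply/seteqP; split => // g _; apply: nH.
by have : normalizer mul inv H g by rewrite NH.
Qed.

Theorem mainTheorem14 (p : nat) (G : topologicalType) (mul : G -> G -> G)
  (inv : G -> G) (one : G) :
  pro_p_group mul inv one p ->
  frattini_injective mul inv one ->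
  forall H : set G, closed_subgroup mul inv one H ->
    finitely_generated mul inv one H ->
    normalizer mul inv H = normalizer mul inv (frattini mul inv one H) /\
    (normal mul inv H <-> normal mul inv (frattini mul inv one H)).
Proof.
move=> [_ [groupG mul_cont _] _ _ _] injF H clH fgH.
have NE := normalizer_frattini groupG mul_cont injF clH fgH.
by split; rewrite // !normal_normalizer NE.
Qed.
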